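(* Let $A:\mathbb{R}^n\to\mathbb{R}^m$ be a bounded linear operator, let $u^\dagger\in\mathbb{R}^n$, $v:=Au^\dagger$, let $\wp>0$ and assume $\|u^\dagger-u_0\|\le\wp$ where $u_0=\Psi(v)$. Let $\{u_k\}_{k\ge0}$ be the iterates of the IRMGL+$\Psi$ iteration with exact data described in the context, and assume $$C_0:=\eta-\nu_0(\wp+\nu_1)-\eta_0\eta_1>0.$$ Then $\|u_k-u^\dagger\|\le\wp$ for all $k\ge0$, $$\|u_{k+1}-u^\dagger\|^2-\|u_k-u^\dagger\|^2\le-2C_0\|Au_k-v\|^2\quad\text{for all }k\ge0,$$ the sequence $\{\|u_k-u^\dagger\|\}_{k\ge0}$ is monotonically decreasing, and $$\sum_{k=0}^\infty\|Au_k-v\|^2\le\frac{1}{2C_0}\|u_0-u^\dagger\|^2<\infty;$$ in particular $\|Au_k-v\|\to0$ as $k\to\infty$.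
   Context: All norms are Euclidean norms, $A^*=A^\top$. Vectors $u\in\mathbb{R}^n$ are images: $n=pq$, pixel set $S=\{(i,j):1\le i\le p,1\le j\le q\}$, $u$ identified with $u:S\to\mathbb{R}$. Graph Laplacian built from $u$: fix $R>0$, $\sigma>0$, a distance $\eth$ on $S$; $g(a,b)=1$ if $0<\eth(a,b)\le R$, else $0$; $h_u(a,b)=\exp(-|u(a)-u(b)|^2/\sigma)$; $w_u=g\,h_u$; $W_u=[w_u(a,b)]$, $D_u=\mathrm{diag}(\sum_b w_u(a,b))$, $\Delta_u=D_u-W_u$. Exact-data iteration: for a map $\Psi:\mathbb{R}^m\to\mathbb{R}^n$, $u_0=\Psi(v)$, $u_{k+1}=u_k-\alpha_kA^*(Au_k-v)-\beta_k\Delta_{u_k}u_k$, where with constants $\eta_0,\eta_1,\nu_0,\nu_1,\nu_2>0$: $\alpha_k=\min\{\eta_0\|Au_k-v\|^2/\|A^*(Au_k-v)\|^2,\eta_1\}$ when $Au_k\ne v$ (when $Au_k=v$ the term $\alpha_kA^*(Au_k-v)$ vanishes); $\beta_k=\min\{\nu_0\|Au_k-v\|^2/\|\Delta_{u_k}u_k\|,\nu_1/\|\Delta_{u_k}u_k\|,\nu_2\}$ if $\Delta_{u_k}u_k\ne0$, else $\beta_k=0$. $\eta$ is a fixed constant with $0<\eta\le\min\{\eta_0/\|A\|^2,\eta_1\}$. *)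

From HB Require Import structures.
From mathcomp Require Import all_boot all_order all_algebra.
From mathcomp Require Import all_classical all_reals all_analysis.
Set Implicit Arguments. Unset Strict Implicit. Unset Printing Implicit Defensive.
Import Order.TTheory GRing.Theory Num.Theory.
Local Open Scope ring_scope.
Local Open Scope classical_set_scope.

Section Defs.
Variable R : realType.

Definition vnorm (n : nat) (x : 'cV[R]_n) : R :=
  Num.sqrt (\sum_(i < n) (x i 0) ^+ 2).

Definition opnorm (m n : nat) (A : 'M[R]_(m, n)) : R :=
  sup [set vnorm (A *m x) | x in [set x : 'cV[R]_n | vnorm x <= 1]].

(* Pixel set S = {1..p} x {1..q} (0-based here), identified with 'I_(p*q)
   through a fixed bijection. *)
Lemma pix_card (p q : nat) : #|{: 'I_p * 'I_q}| = (p * q)%N.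
Proof. by rewrite card_prod !card_ord. Qed.

Definition pixel_of (p q : nat) (k : 'I_(p * q)) : 'I_p * 'I_q :=
  enum_val (cast_ord (esym (pix_card p q)) k).

Definition is_distance (p q : nat) (eth : 'I_p * 'I_q -> 'I_p * 'I_q -> R) :=
  [/\ forall a b, 0 <= eth a b,
      forall a b, eth a b = 0 <-> a = b,
      forall a b, eth a b = eth b a
    & forall a b c, eth a c <= eth a b + eth b c].

Definition gw (p q : nat) (eth : 'I_p * 'I_q -> 'I_p * 'I_q -> R) (Rad : R)
  (a b : 'I_p * 'I_q) : R :=
  if (0 < eth a b) && (eth a b <= Rad) then 1 else 0.

Definition hw (p q : nat) (sigma : R) (u : 'cV[R]_(p * q)) (k l : 'I_(p * q)) : R :=
  expR (- ((`|u k 0 - u l 0|) ^+ 2) / sigma).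

Definition Wmat (p q : nat) (eth : 'I_p * 'I_q -> 'I_p * 'I_q -> R) (Rad sigma : R)
  (u : 'cV[R]_(p * q)) : 'M[R]_(p * q) :=
  \matrix_(k, l) (gw eth Rad (pixel_of k) (pixel_of l) * hw sigma u k l).

Definition Dmat (p q : nat) (eth : 'I_p * 'I_q -> 'I_p * 'I_q -> R) (Rad sigma : R)
  (u : 'cV[R]_(p * q)) : 'M[R]_(p * q) :=
  diag_mx (\row_k (\sum_l Wmat eth Rad sigma u k l)).

Definition Lap (p q : nat) (eth : 'I_p * 'I_q -> 'I_p * 'I_q -> R) (Rad sigma : R)
  (u : 'cV[R]_(p * q)) : 'M[R]_(p * q) :=
  Dmat eth Rad sigma u - Wmat eth Rad sigma u.

Definition alpha_k (m n : nat) (A : 'M[R]_(m, n)) (v : 'cV[R]_m) (eta0 eta1 : R)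
  (u : 'cV[R]_n) : R :=
  let r := A *m u - v in
  if r == 0 then 0 (* the term alpha_k A^*(Au_k - v) vanishes anyway *)
  else Num.min (eta0 * vnorm r ^+ 2 / vnorm (A^T *m r) ^+ 2) eta1.

Definition beta_k (m p q : nat) (A : 'M[R]_(m, p * q)) (v : 'cV[R]_m)
  (eth : 'I_p * 'I_q -> 'I_p * 'I_q -> R) (Rad sigma nu0 nu1 nu2 : R)
  (u : 'cV[R]_(p * q)) : R :=
  let L := Lap eth Rad sigma u *m u in
  if L == 0 then 0
  else Num.min (Num.min (nu0 * vnorm (A *m u - v) ^+ 2 / vnorm L)
                        (nu1 / vnorm L)) nu2.

Definition irm_step (m p q : nat) (A : 'M[R]_(m, p * q)) (v : 'cV[R]_m)
  (eth : 'I_p * 'I_q -> 'I_p * 'I_q -> R) (Rad sigma eta0 eta1 nu0 nu1 nu2 : R)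
  (u : 'cV[R]_(p * q)) : 'cV[R]_(p * q) :=
  u - alpha_k A v eta0 eta1 u *: (A^T *m (A *m u - v))
    - beta_k A v eth Rad sigma nu0 nu1 nu2 u *: (Lap eth Rad sigma u *m u).

Definition irm_iter (m p q : nat) (A : 'M[R]_(m, p * q)) (v : 'cV[R]_m)
  (Psi : 'cV[R]_m -> 'cV[R]_(p * q))
  (eth : 'I_p * 'I_q -> 'I_p * 'I_q -> R) (Rad sigma eta0 eta1 nu0 nu1 nu2 : R)
  (k : nat) : 'cV[R]_(p * q) :=
  iter k (irm_step A v eth Rad sigma eta0 eta1 nu0 nu1 nu2) (Psi v).

End Defs.

(** Write [e = u_k - u^dagger], [r = A u_k - v = A e], [g = A^T r] and
    [L = Delta_{u_k} u_k].  Because [<e, g> = |r|^2], expanding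
    [|e - alpha g - beta L|^2] and using [|alpha g + beta L|^2 <= 2 alpha^2 |g|^2
    + 2 beta^2 |L|^2] and [-<e, L> <= |e| |L|] gives
    [|e_{k+1}|^2 - |e|^2 <= 2 alpha^2 |g|^2 + 2 beta^2 |L|^2 - 2 alpha |r|^2
    + 2 beta |e| |L|].  The step-size rules give [alpha |g|^2 <= eta0 |r|^2],
    [alpha <= eta1], [beta |L| <= nu1], [beta |L| <= nu0 |r|^2] and, since
    [|g| <= |A| |r|], also [alpha >= eta] whenever [r <> 0].  So while [|e| <= wp]
    every term is a multiple of [|r|^2], and the total is at most [-2 C0 |r|^2].
    Hence [|u_k - u^dagger|] never exceeds [wp], and telescoping bounds the
    partial sums of [|A u_k - v|^2] by [|u_0 - u^dagger|^2 / (2 C0)]. *)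
From HB Require Import structures.
From mathcomp Require Import all_boot all_order all_algebra.
From mathcomp Require Import all_classical all_reals all_analysis.
From mathcomp Require Import ring lra.
Import numFieldNormedType.Exports.
Set Implicit Arguments. Unset Strict Implicit. Unset Printing Implicit Defensive.
Import Order.TTheory GRing.Theory Num.Theory.
Local Open Scope ring_scope.
Local Open Scope classical_set_scope.

Section Euclidean.
Variable R : realType.
Implicit Types (n : nat) (a : R).

Definition dot n (x y : 'cV[R]_n) : R := \sum_(i < n) x i 0 * y i 0.

Lemma dotC n (x y : 'cV[R]_n) : dot x y = dot y x.
Proof. by apply: eq_bigr => i _; rewrite mulrC. Qed.

Lemma dotDl n (x y z : 'cV[R]_n) : dot (x + y) z = dot x z + dot y z.
Proof. by rewrite /dot -big_split; apply: eq_bigr => i _; rewrite !mxE mulrDl. Qed.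

Lemma dotNl n (x z : 'cV[R]_n) : dot (- x) z = - dot x z.
Proof. by rewrite /dot -sumrN; apply: eq_bigr => i _; rewrite !mxE mulNr. Qed.

Lemma dotZl n a (x z : 'cV[R]_n) : dot (a *: x) z = a * dot x z.
Proof. by rewrite /dot mulr_sumr; apply: eq_bigr => i _; rewrite !mxE mulrA. Qed.

Lemma dotDr n (x y z : 'cV[R]_n) : dot z (x + y) = dot z x + dot z y.
Proof. by rewrite !(dotC z) dotDl. Qed.

Lemma dotNr n (x z : 'cV[R]_n) : dot z (- x) = - dot z x.
Proof. by rewrite !(dotC z) dotNl. Qed.

Lemma dotZr n a (x z : 'cV[R]_n) : dot z (a *: x) = a * dot z x.
Proof. by rewrite !(dotC z) dotZl. Qed.

Lemma dot0l n (y : 'cV[R]_n) : dot 0 y = 0.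
Proof. by rewrite /dot big1 // => i _; rewrite mxE mul0r. Qed.

Lemma dot0r n (x : 'cV[R]_n) : dot x 0 = 0.
Proof. by rewrite dotC dot0l. Qed.

Lemma dot_trmx m n (A : 'M[R]_(m, n)) x y : dot x (A^T *m y) = dot (A *m x) y.
Proof.
rewrite /dot; under eq_bigr do rewrite mxE big_distrr /=.
under [RHS]eq_bigr do rewrite mxE big_distrl /=.
rewrite exchange_big; apply: eq_bigr => i _; apply: eq_bigr => j _.
by rewrite !mxE mulrCA mulrA.
Qed.

Lemma vnorm_ge0 n (x : 'cV[R]_n) : 0 <= vnorm x.
Proof. exact: sqrtr_ge0. Qed.

Lemma vnorm_sqr n (x : 'cV[R]_n) : vnorm x ^+ 2 = dot x x.
Proof.
rewrite /vnorm sqr_sqrtr; last by apply: sumr_ge0 => i _; rewrite sqr_ge0.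
by apply: eq_bigr => i _; rewrite expr2.
Qed.

Lemma vnorm_eq0 n (x : 'cV[R]_n) : (vnorm x == 0) = (x == 0).
Proof.
rewrite sqrtr_eq0; apply/idP/eqP => [hle|->]; last first.
  by rewrite big1 // => i _; rewrite mxE expr0n.
have /psumr_eq0P eq0 : \sum_(i < n) x i 0 ^+ 2 = 0.
  by apply/eqP; rewrite eq_le hle sumr_ge0 // => i _; rewrite sqr_ge0.
apply/matrixP => i j; rewrite ord1 mxE.
by apply/eqP; rewrite -sqrf_eq0 eq0 // => k _; rewrite sqr_ge0.
Qed.

Lemma vnorm_gt0 n (x : 'cV[R]_n) : (0 < vnorm x) = (x != 0).
Proof. by rewrite lt_def vnorm_ge0 vnorm_eq0 andbT. Qed.

Lemma vnorm0 n : vnorm (0 : 'cV[R]_n) = 0.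
Proof. by apply/eqP; rewrite vnorm_eq0. Qed.

Lemma vnormZ n a (x : 'cV[R]_n) : vnorm (a *: x) = `|a| * vnorm x.
Proof.
rewrite /vnorm; under eq_bigr do rewrite mxE exprMn.
by rewrite -mulr_sumr sqrtrM ?sqr_ge0 // sqrtr_sqr.
Qed.

Lemma vnormN n (x : 'cV[R]_n) : vnorm (- x) = vnorm x.
Proof. by rewrite -scaleN1r vnormZ normrN1 mul1r. Qed.

(* Expand [| |y| x - |x| y |^2 >= 0]. *)
Lemma dot_le n (x y : 'cV[R]_n) : dot x y <= vnorm x * vnorm y.
Proof.
have [->|x0] := eqVneq x 0; first by rewrite vnorm0 mul0r dot0l.
have [->|y0] := eqVneq y 0; first by rewrite vnorm0 mulr0 dot0r.
have := sqr_ge0 (vnorm (vnorm y *: x - vnorm x *: y)); rewrite vnorm_sqr.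
rewrite !(dotDl, dotDr, dotNl, dotNr, dotZl, dotZr) -!vnorm_sqr (dotC y x) => ?.
have : 0 <= 2 * (vnorm x * vnorm y) * (vnorm x * vnorm y - dot x y) by lra.
by rewrite pmulr_rge0 ?subr_ge0 // !mulr_gt0 ?vnorm_gt0.
Qed.

Lemma normr_dot_le n (x y : 'cV[R]_n) : `|dot x y| <= vnorm x * vnorm y.
Proof. by rewrite ler_norml dot_le andbT lerNl -dotNl -[vnorm x](vnormN x) dot_le. Qed.

Lemma vnormB_sqr_le n (x y : 'cV[R]_n) :
  vnorm (x - y) ^+ 2 <= 2 * (vnorm x ^+ 2 + vnorm y ^+ 2).
Proof.
have := sqr_ge0 (vnorm (x + y)); rewrite !vnorm_sqr.
rewrite !(dotDl, dotDr, dotNl, dotNr) (dotC y x); lra.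
Qed.

End Euclidean.

Section OperatorNorm.
Variables (R : realType) (m n : nat) (A : 'M[R]_(m, n)).

Lemma opnorm_has_ubound :
  has_ubound [set vnorm (A *m x) | x in [set x : 'cV[R]_n | vnorm x <= 1]].
Proof.
pose M := \sum_(i < m) vnorm (row i A)^T ^+ 2.
exists (Num.sqrt M) => _ [x /= x1 <-]; rewrite [vnorm _]/vnorm ler_sqrt; last first.
  by apply: sumr_ge0 => i _; rewrite sqr_ge0.
apply: ler_sum => i _.
have -> : (A *m x) i 0 = dot (row i A)^T x.
  by rewrite mxE; apply: eq_bigr => j _; rewrite !mxE.
rewrite -real_normK ?num_real //.
apply: (le_trans (lerXn2r _ _ _ (normr_dot_le _ _))); rewrite ?nnegrE ?mulr_ge0 ?vnorm_ge0 //.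
rewrite exprMn ler_piMr ?sqr_ge0 // expr_le1 ?vnorm_ge0 //.
Qed.

Lemma opnorm_ge0 : 0 <= opnorm A.
Proof.
apply: (ub_le_sup opnorm_has_ubound); exists 0; rewrite /= ?vnorm0 //.
by rewrite mulmx0 vnorm0.
Qed.

Lemma vnorm_mulmx_le x : vnorm (A *m x) <= opnorm A * vnorm x.
Proof.
have [->|x0] := eqVneq x 0; first by rewrite mulmx0 !vnorm0 mulr0.
have xp : 0 < vnorm x by rewrite vnorm_gt0.
have : vnorm (A *m ((vnorm x)^-1 *: x)) <= opnorm A.
  apply: (ub_le_sup opnorm_has_ubound); exists ((vnorm x)^-1 *: x) => //=.
  by rewrite vnormZ ger0_norm ?invr_ge0 ?vnorm_ge0 // mulVf ?gt_eqF.
rewrite -scalemxAr vnormZ ger0_norm ?invr_ge0 ?vnorm_ge0 //.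
by rewrite mulrC ler_pdivrMr // mulrC.
Qed.

(* [|A^T y|^2 = <A A^T y, y> <= |A| |A^T y| |y|]. *)
Lemma vnorm_trmx_mulmx_le y : vnorm (A^T *m y) <= opnorm A * vnorm y.
Proof.
have [->|g0] := eqVneq (A^T *m y) 0; first by rewrite vnorm0 mulr_ge0 ?opnorm_ge0 ?vnorm_ge0.
rewrite -(ler_pM2r (_ : 0 < vnorm (A^T *m y))) ?vnorm_gt0 // -expr2 vnorm_sqr.
rewrite dot_trmx (le_trans (dot_le _ _)) // mulrAC ler_wpM2r ?vnorm_ge0 //.
exact: vnorm_mulmx_le.
Qed.

End OperatorNorm.

Section StepSizes.
Variables (R : realType) (m : nat) (v : 'cV[R]_m).

Section Alpha.
Variables (n : nat) (A : 'M[R]_(m, n)) (w : 'cV[R]_n) (eta0 eta1 : R).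
Hypotheses (eta0_ge0 : 0 <= eta0) (eta1_ge0 : 0 <= eta1).
Let alpha := alpha_k A v eta0 eta1 w.
Let r := A *m w - v.

Lemma alpha_k_ge0 : 0 <= alpha.
Proof.
rewrite /alpha /alpha_k -/r /=; case: eqP => // _.
by rewrite le_min eta1_ge0 andbT divr_ge0 ?sqr_ge0 // mulr_ge0 ?sqr_ge0.
Qed.

Lemma alpha_k_le : alpha <= eta1.
Proof. by rewrite /alpha /alpha_k /=; case: eqP => // _; rewrite ge_min lexx orbT. Qed.

Lemma alpha_k_grad_le : alpha * vnorm (A^T *m r) ^+ 2 <= eta0 * vnorm r ^+ 2.
Proof.
rewrite /alpha /alpha_k -/r /=; case: eqP => [_|_]; first by rewrite mul0r mulr_ge0 ?sqr_ge0.
have [->|g0] := eqVneq (A^T *m r) 0; first by rewrite vnorm0 expr0n mulr0 mulr_ge0 ?sqr_ge0.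
rewrite -ler_pdivlMr ?exprn_gt0 ?vnorm_gt0 //.
by rewrite ge_min lexx.
Qed.

(* For a consistent residual [r = A (w - udag)] one has [|r|^2 = <w - udag, A^T r>],
   so [A^T r] cannot vanish unless [r] does. *)
Lemma alpha_k_ge (udag : 'cV[R]_n) (eta : R) :
  v = A *m udag -> 0 <= eta -> eta * opnorm A ^+ 2 <= eta0 -> eta <= eta1 ->
  r != 0 -> eta <= alpha.
Proof.
move=> vA eta_ge0 eta_op eta_le r0.
have res_sqr : vnorm r ^+ 2 = dot (w - udag) (A^T *m r).
  by rewrite dot_trmx mulmxBr -vA vnorm_sqr.
have g0 : A^T *m r != 0.
  by apply: contra r0 => /eqP g0; rewrite -vnorm_eq0 -sqrf_eq0 res_sqr g0 dot0r.
rewrite /alpha /alpha_k -/r /= (negbTE r0) le_min eta_le andbT.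
rewrite ler_pdivlMr ?exprn_gt0 ?vnorm_gt0 //.
have grad_le : vnorm (A^T *m r) ^+ 2 <= opnorm A ^+ 2 * vnorm r ^+ 2.
  rewrite -exprMn lerXn2r ?nnegrE ?mulr_ge0 ?opnorm_ge0 ?vnorm_ge0 //.
  exact: vnorm_trmx_mulmx_le.
apply: le_trans (ler_wpM2l eta_ge0 grad_le) _.
by rewrite mulrA ler_wpM2r ?sqr_ge0.
Qed.

End Alpha.

Section Beta.
Variables (p q : nat) (A : 'M[R]_(m, p * q)) (w : 'cV[R]_(p * q)).
Variables (eth : 'I_p * 'I_q -> 'I_p * 'I_q -> R) (Rad sigma nu0 nu1 nu2 : R).
Hypotheses (nu0_ge0 : 0 <= nu0) (nu1_ge0 : 0 <= nu1) (nu2_ge0 : 0 <= nu2).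
Let beta := beta_k A v eth Rad sigma nu0 nu1 nu2 w.
Let L := Lap eth Rad sigma w *m w.
Let res2 := vnorm (A *m w - v) ^+ 2.

Lemma beta_k_ge0 : 0 <= beta.
Proof.
rewrite /beta /beta_k -/L /=; case: eqP => // _.
by rewrite !le_min nu2_ge0 andbT !divr_ge0 ?vnorm_ge0 // mulr_ge0 ?sqr_ge0.
Qed.

Lemma beta_k_Lap_le : beta * vnorm L <= nu1.
Proof.
rewrite /beta /beta_k -/L /=; case: eqP => [_|/eqP L0]; first by rewrite mul0r.
by rewrite -ler_pdivlMr ?vnorm_gt0 // !ge_min lexx !orbT.
Qed.

Lemma beta_k_Lap_le_res : beta * vnorm L <= nu0 * res2.
Proof.
rewrite /beta /beta_k -/L /=; case: eqP => [_|/eqP L0].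
  by rewrite mul0r mulr_ge0 ?sqr_ge0.
by rewrite -ler_pdivlMr ?vnorm_gt0 // !ge_min lexx.
Qed.

End Beta.
End StepSizes.

Lemma vnorm_descent (R : realType) n (e g L : 'cV[R]_n) (a b rho eta eta0 eta1 nu0 nu1 wp : R) :
  dot e g = rho -> vnorm e <= wp ->
  0 <= a -> a <= eta1 -> a * vnorm g ^+ 2 <= eta0 * rho -> eta * rho <= a * rho ->
  0 <= b -> b * vnorm L <= nu1 -> b * vnorm L <= nu0 * rho ->
  vnorm (e - a *: g - b *: L) ^+ 2 - vnorm e ^+ 2
    <= - 2 * (eta - nu0 * (wp + nu1) - eta0 * eta1) * rho.
Proof.
move=> eg e_le a_ge0 a_le ag_le eta_le b_ge0 bL_nu1 bL_res.
have expand : vnorm (e - a *: g - b *: L) ^+ 2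
    = vnorm e ^+ 2 + vnorm (a *: g + b *: L) ^+ 2 - 2 * a * rho - 2 * b * dot e L.
  rewrite !vnorm_sqr -eg !(dotDl, dotDr, dotNl, dotNr, dotZl, dotZr).
  rewrite (dotC g e) (dotC L e) (dotC L g); ring.
have ag : vnorm (a *: g) ^+ 2 <= eta1 * (eta0 * rho).
  rewrite vnormZ ger0_norm // exprMn expr2 -mulrA.
  by apply: ler_pM; rewrite ?mulr_ge0 ?vnorm_ge0.
have bL : vnorm (b *: L) ^+ 2 <= nu1 * (nu0 * rho).
  rewrite vnormZ ger0_norm // expr2.
  by apply: ler_pM; rewrite ?mulr_ge0 ?vnorm_ge0.
have eL : - (b * dot e L) <= wp * (nu0 * rho).
  apply: (@le_trans _ _ (b * (vnorm e * vnorm L))).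
    by rewrite -mulrN ler_wpM2l // lerNl lerNnormlW ?normr_dot_le.
  by rewrite mulrCA; apply: ler_pM; rewrite ?mulr_ge0 ?vnorm_ge0.
have := vnormB_sqr_le (a *: g) (- (b *: L)); rewrite opprK vnormN.
lra.
Qed.

Lemma irm_step_descent (R : realType) (m p q : nat) (A : 'M[R]_(m, p * q))
    (v : 'cV[R]_m) (udag w : 'cV[R]_(p * q)) (eth : 'I_p * 'I_q -> 'I_p * 'I_q -> R)
    (Rad sigma eta eta0 eta1 nu0 nu1 nu2 wp : R) :
  0 <= eta0 -> 0 <= eta1 -> 0 <= nu0 -> 0 <= nu1 -> 0 <= nu2 -> 0 <= eta ->
  eta * opnorm A ^+ 2 <= eta0 -> eta <= eta1 -> v = A *m udag ->
  vnorm (w - udag) <= wp ->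
  vnorm (irm_step A v eth Rad sigma eta0 eta1 nu0 nu1 nu2 w - udag) ^+ 2
    - vnorm (w - udag) ^+ 2
  <= - 2 * (eta - nu0 * (wp + nu1) - eta0 * eta1) * vnorm (A *m w - v) ^+ 2.
Proof.
move=> eta0_ge0 eta1_ge0 nu0_ge0 nu1_ge0 nu2_ge0 eta_ge0 eta_op eta_le vA w_le.
rewrite /irm_step addrAC [_ - udag]addrAC.
apply: vnorm_descent => //.
- by rewrite dot_trmx mulmxBr -vA vnorm_sqr.
- exact: alpha_k_ge0.
- exact: alpha_k_le.
- exact: alpha_k_grad_le.
- have [->|r0] := eqVneq (A *m w - v) 0; first by rewrite vnorm0 expr0n !mulr0.
  by rewrite ler_wpM2r ?sqr_ge0 // (alpha_k_ge vA eta_ge0 eta_op eta_le r0).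
- exact: beta_k_ge0.
- exact: beta_k_Lap_le.
- exact: beta_k_Lap_le_res.
Qed.

Section Series.
Variable R : realType.
Implicit Types (r e : nat -> R) (c M : R).

Lemma ler_telescope_sum c r e N :
  (forall k, c * r k <= e k - e k.+1) -> c * \sum_(0 <= k < N) r k <= e 0%N - e N.
Proof.
move=> step; rewrite mulr_sumr (le_trans (ler_sum _ (fun k _ => step k))) //.
rewrite (telescope_sumr_eq (fun k => - e k)) // => [|k _]; last by rewrite opprK addrC.
by rewrite opprK addrC.
Qed.

Lemma nneseries_le_ub r M :
  (forall k, 0 <= r k) -> (forall N, \sum_(0 <= k < N) r k <= M) ->
  (\sum_(0 <= k <oo) (r k)%:E <= M%:E)%E.
Proof.
move=> r_ge0 partial_le; apply: lime_le.
  by apply: is_cvg_ereal_nneg_natsum => k _; rewrite lee_fin.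
by apply: nearW => N; rewrite sumEFin lee_fin.
Qed.

Lemma cvg0_of_bounded_series r M :
  (forall k, 0 <= r k) -> (forall N, \sum_(0 <= k < N) r k <= M) -> r @ \oo --> 0.
Proof.
move=> r_ge0 partial_le; apply: cvg_series_cvg_0; apply: nondecreasing_is_cvgn.
  by apply: nondecreasing_series => k _ _.
by exists M => _ [N _ <-]; apply: partial_le.
Qed.

End Series.

Unset Implicit Arguments.

Theorem lemma3p8 (R : realType) (m p q : nat) (A : 'M[R]_(m, p * q))
  (udag : 'cV[R]_(p * q)) (Psi : 'cV[R]_m -> 'cV[R]_(p * q))
  (eth : 'I_p * 'I_q -> 'I_p * 'I_q -> R) (Rad sigma : R)
  (eta eta0 eta1 nu0 nu1 nu2 wp : R) :
  is_distance eth -> 0 < Rad -> 0 < sigma ->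
  0 < eta0 -> 0 < eta1 -> 0 < nu0 -> 0 < nu1 -> 0 < nu2 ->
  0 < eta -> eta * opnorm A ^+ 2 <= eta0 -> eta <= eta1 ->
  0 < wp ->
  vnorm (udag - Psi (A *m udag)) <= wp ->
  let v := A *m udag in
  let u := irm_iter A v Psi eth Rad sigma eta0 eta1 nu0 nu1 nu2 in
  let C0 := eta - nu0 * (wp + nu1) - eta0 * eta1 in
  0 < C0 ->
  [/\ (forall k, vnorm (u k - udag) <= wp),
      (forall k, vnorm (u k.+1 - udag) ^+ 2 - vnorm (u k - udag) ^+ 2
                   <= - 2 * C0 * vnorm (A *m u k - v) ^+ 2),
      (forall k, vnorm (u k.+1 - udag) <= vnorm (u k - udag)),
      (\sum_(0 <= k <oo) ((vnorm (A *m u k - v) ^+ 2)%:E)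
         <= ((2 * C0)^-1 * vnorm (u 0%N - udag) ^+ 2)%:E)%E
    & (fun k => vnorm (A *m u k - v)) @ \oo --> 0].
Proof.
(* The graph Laplacian enters only through [beta_k], which is bounded without
   using any property of [eth], [Rad] or [sigma]. *)
move=> _ _ _ eta0_gt0 eta1_gt0 nu0_gt0 nu1_gt0 nu2_gt0 eta_gt0 eta_op eta_le _ u0_le
  v u C0 C0_gt0.
pose err k := vnorm (u k - udag); pose res2 k := vnorm (A *m u k - v) ^+ 2.
have res2_ge0 k : 0 <= res2 k by rewrite sqr_ge0.
have descent k : err k <= wp -> err k.+1 ^+ 2 - err k ^+ 2 <= - 2 * C0 * res2 k.
  by rewrite /err /u /irm_iter iterS; apply: irm_step_descent; rewrite // ltW.
have decr k : err k <= wp -> err k.+1 <= err k.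
  move=> err_k; rewrite -(ler_pXn2r (n := 2)) ?nnegrE ?vnorm_ge0 //.
  have := descent k err_k.
  by have := mulr_ge0 (ltW C0_gt0) (res2_ge0 k); lra.
have err_le k : err k <= wp.
  elim: k => [|k IH]; last exact: le_trans (decr k IH) IH.
  by rewrite /err /u /= -vnormN opprB.
have partial_le N : \sum_(0 <= k < N) res2 k <= (2 * C0)^-1 * err 0%N ^+ 2.
  rewrite ler_pdivlMl ?mulr_gt0 //.
  apply: le_trans (ler_telescope_sum (e := fun k => err k ^+ 2) N _) _.
    by move=> k; have := descent k (err_le k); lra.
  by rewrite lerBlDr lerDl sqr_ge0.
split => // [k|k||]; [exact: descent | exact: decr | exact: nneseries_le_ub partial_le |].
have -> : (fun k => vnorm (A *m u k - v)) = Num.sqrt \o res2.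
  by apply/funext => k /=; rewrite sqrtr_sqr ger0_norm ?vnorm_ge0.
by rewrite -sqrtr0; apply: continuous_cvg; [exact: sqrt_continuous |
  exact: cvg0_of_bounded_series partial_le].
Qed.
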